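(* Let $p$ be a prime, $k\ge2$ an integer, $R=\{t^k: t\in\mathbb F_p^*\}$, and $G=\{x\mapsto rx+b: r\in R,\ b\in\mathbb F_p\}\le{\rm AGL}(1,p)$. Then every element of $G\wr S_k$, in the product action on $\mathbb F_p^k$, is an imprimitive permutation of $\mathbb F_p^k$.
   Context: For $H\le{\rm Sym}(\Delta)$ and $K\le S_k$, $H\wr K$ in product action acts on $\Delta^k$ by applying $h_i$ to the $i$-th coordinate and permuting coordinates by $\sigma\in K$. A permutation of a set $\Omega$ of size $n$ is imprimitive if it preserves a partition of $\Omega$ into blocks of equal size $m$ with $1<m<n$. *)

From HB Require Import structures.
From mathcomp Require Import all_boot all_order all_algebra all_fingroup.
Set Implicit Arguments. Unset Strict Implicit. Unset Printing Implicit Defensive.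
Import GRing.Theory.
Local Open Scope ring_scope.

Definition kth_powers (p k : nat) : pred 'F_p :=
  fun r => [exists t : 'F_p, (t != 0) && (r == t ^+ k)].

Arguments kth_powers : clear implicits.

(* The element ((x |-> r_i x + b_i)_i ; s) of G wr S_k acting in product
   action on F_p^k = {ffun 'I_k -> 'F_p}: coordinates are permuted by s
   and then the affine map h_i is applied in coordinate i. *)
Definition wreath_act (p k : nat) (r b : 'I_k -> 'F_p) (s : 'S_k)
  (x : {ffun 'I_k -> 'F_p}) : {ffun 'I_k -> 'F_p} :=
  [ffun i => r i * x ((s^-1)%g i) + b i].

Definition imprimitive (T : finType) (f : T -> T) : Prop :=
  exists (P : {set {set T}}) (m : nat),
    [/\ partition P [set: T], (1 < m)%N, (m < #|T|)%N,
        (forall B, B \in P -> #|B| = m) &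
        (forall B, B \in P -> f @: B \in P)].

From HB Require Import structures.
From mathcomp Require Import all_boot all_order all_algebra all_fingroup.
From mathcomp Require Import ring.
Set Implicit Arguments. Unset Strict Implicit. Unset Printing Implicit Defensive.
Import GRing.Theory.
Local Open Scope ring_scope.

(* An element of G wr S_k acts as x |-> L x + b, where L is the monomial map
   x |-> (r_i x_(s^-1 i))_i, so the cosets of any L-invariant additive subgroup W
   are blocks of imprimitivity. If some s-orbit J of coordinates is proper, take for
   W the vectors supported on J. Otherwise s is a k-cycle, L^k is multiplication by
   the product of the r_i, itself a k-th power mu^k, and
   v = \sum_(j < k) mu^-j L^j e_i is an eigenvector of L: take for W the line F v. *)

(* The library declares the Z-module and the finite type structures of finite
   functions separately; this derives their join finZmodType. *)
HB.saturate finfun_of.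

Definition nontrivial_invariant_subgroup (V : finZmodType) (L : V -> V) (W : {set V}) :=
  [/\ zmod_closed W, {in W, forall x, L x \in W} & (1 < #|W| < #|V|)%N].

Section CosetBlocks.
Variables (V : finZmodType) (f L : V -> V) (W : {set V}).
Hypotheses (L_inj : injective L) (fB : forall x y, f x - f y = L (x - y)).
Hypothesis W_inv : nontrivial_invariant_subgroup L W.

Let coset x := [set y | y - x \in W].

Let card_coset x : #|coset x| = #|W|.
Proof.
have -> : coset x = [set w + x | w in W].
  apply/setP=> y; rewrite inE; apply/idP/imsetP => [yxW|[w wW ->]].
    by exists (y - x); rewrite ?subrK.
  by rewrite addrK.
exact/card_imset/addIr.
Qed.

Let f_inj : injective f.
Proof.
move=> x y fxy; apply/eqP; rewrite -subr_eq0 -(subrr y); apply/eqP/L_inj.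
by rewrite -!fB fxy.
Qed.

Let imset_coset x : f @: coset x = coset (f x).
Proof.
have [_ LW _] := W_inv; apply/eqP.
rewrite eqEcard (card_imset _ f_inj) !card_coset leqnn andbT.
by apply/subsetP=> _ /imsetP[y yB ->]; rewrite inE fB LW //; rewrite inE in yB.
Qed.

Lemma coset_blocks_imprimitive : imprimitive f.
Proof.
have [[W0 WB] _ /andP[W_gt1 W_ltV]] := W_inv.
have WD x y : x \in W -> y \in W -> x + y \in W.
  by move=> xW yW; rewrite -[y]opprK WB // -sub0r WB.
pose R x y := y - x \in W.
have R_equiv : {in [set: V] & &, equivalence_rel R}.
  move=> x y z _ _ _; rewrite /R subrr; split=> // Rxy.
  rewrite /R in Rxy *; apply/idP/idP => [Rxz|Ryz].
    have -> : z - y = (z - x) - (y - x) by rewrite opprB addrA subrK.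
    exact: WB.
  by rewrite -(subrK y z) -addrA WD.
have cosetE x : [set y in [set: V] | R x y] = coset x.
  by apply/setP=> y; rewrite !inE.
exists (equivalence_partition R [set: V]), #|W|; split => //.
- exact: equivalence_partitionP.
- by move=> _ /imsetP[x _ ->]; rewrite cosetE card_coset.
move=> _ /imsetP[x _ ->]; rewrite cosetE imset_coset.
by apply/imsetP; exists (f x); rewrite ?cosetE.
Qed.

End CosetBlocks.

Lemma prod_nonzero_expr (R : idomainType) (J : Type) (rs : seq J) (G : J -> R) n :
  (forall j, exists2 t, t != 0 & G j = t ^+ n) ->
  exists2 t, t != 0 & \prod_(j <- rs) G j = t ^+ n.
Proof.
move=> G_pow; apply: (big_ind (fun x => exists2 t, t != 0 & x = t ^+ n)) => //.
  by exists 1; rewrite ?oner_neq0 ?expr1n.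
move=> _ _ [t t_neq0 ->] [u u_neq0 ->].
by exists (t * u); rewrite ?mulf_neq0 ?exprMn.
Qed.

Section PermOrbit.
Variables (T : finType) (s : {perm T}) (x : T).

Lemma expg_card_porbit : (s ^+ #|porbit s x|)%g x = x.
Proof. by rewrite permX iter_porbit. Qed.

Lemma expg_porbit_neq j : (0 < j < #|porbit s x|)%N -> (s ^+ j)%g x != x.
Proof.
case/andP=> j_gt0 j_lt; have n_gt0 := ltn_trans j_gt0 j_lt.
have := nth_uniq x _ _ (uniq_traject_porbit s x); rewrite size_traject.
move=> /(_ j 0 j_lt n_gt0); rewrite !nth_traject // permX /= => ->.
by rewrite -lt0n.
Qed.

End PermOrbit.

Section IterateEigenvector.
Variables (F : fieldType) (V : lmodType F) (L : {linear V -> V}).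

Lemma linear_eigen_sum_iter (mu : F) n w :
  mu != 0 -> iter n L w = mu ^+ n *: w ->
  L (\sum_(j < n) mu ^- j *: iter j L w) = mu *: \sum_(j < n) mu ^- j *: iter j L w.
Proof.
move=> mu_neq0 Lnw; pose g j := mu ^- j *: iter j L w.
(* Applying L shifts the sum by one index; both boundary terms equal w. *)
have shift : \sum_(j < n) g j.+1 = \sum_(j < n) g j.
  have g0 : g 0%N = w by rewrite /g expr0 invr1 scale1r.
  have gn : g n = w by rewrite /g Lnw scalerA mulVf ?scale1r ?expf_neq0.
  have recl : \sum_(j < n.+1) g j = w + \sum_(j < n) g j.+1.
    by rewrite big_ord_recl g0.
  have recr : \sum_(j < n.+1) g j = \sum_(j < n) g j + w.
    by rewrite big_ord_recr gn.
  by apply: (@addIr _ w); rewrite addrC -recl recr.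
rewrite linear_sum -shift scaler_sumr; apply: eq_bigr => j _.
by rewrite linearZ /= scalerA /g iterS -!exprVn exprS mulrA mulfV ?mul1r.
Qed.

End IterateEigenvector.

Section MonomialMap.
Variables (F : fieldType) (I : finType) (r : I -> F) (s : {perm I}).

(* F^o is F seen as a module over itself, which makes {ffun I -> F^o} an F-vector
   space; it is convertible to {ffun I -> F}. *)
Definition monomial_map (x : {ffun I -> F^o}) : {ffun I -> F^o} :=
  [ffun i => r i * x ((s^-1)%g i)].

Lemma monomial_map_is_linear : linear monomial_map.
Proof. by move=> a x y; apply/ffunP=> i; rewrite !ffunE mulrDr mulrCA. Qed.

HB.instance Definition _ :=
  GRing.isLinear.Build F {ffun I -> F^o} {ffun I -> F^o} _ monomial_map
    monomial_map_is_linear.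

Definition delta_ffun (i : I) : {ffun I -> F^o} := [ffun j => (j == i)%:R].

Lemma monomial_map_delta i : monomial_map (delta_ffun i) = r (s i) *: delta_ffun (s i).
Proof.
apply/ffunP=> j; rewrite !ffunE; have [->|ne] := eqVneq j (s i); first by rewrite permK !eqxx.
have ne' : (s^-1)%g j != i by apply: contra_neq ne => <-; rewrite permKV.
by rewrite (negbTE ne') mulr0n mulr0 scaler0.
Qed.

Lemma iter_monomial_map_delta n i :
  iter n monomial_map (delta_ffun i) =
  (\prod_(l < n) r ((s ^+ l.+1)%g i)) *: delta_ffun ((s ^+ n)%g i).
Proof.
elim: n => [|n IHn]; first by rewrite big_ord0 scale1r expg0 perm1.
by rewrite iterS IHn linearZ /= monomial_map_delta scalerA big_ord_recr expgSr permM.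
Qed.

Lemma monomial_map_eigenvector i0 mu :
  mu != 0 -> \prod_(l < #|porbit s i0|) r ((s ^+ l.+1)%g i0) = mu ^+ #|porbit s i0| ->
  exists2 v : {ffun I -> F^o}, v i0 = 1 & monomial_map v = mu *: v.
Proof.
move=> mu_neq0 prod_r; have n_gt0 : (0 < #|porbit s i0|)%N by rewrite lt0n card_porbit_neq0.
exists (\sum_(j < #|porbit s i0|) mu ^- j *: iter j monomial_map (delta_ffun i0)).
  rewrite sum_ffunE (bigD1 (Ordinal n_gt0)) //= big1 ?addr0 => [|j j_neq0].
    by rewrite !ffunE expr0 invr1 eqxx !scale1r.
  have j_gt0 : (0 < j)%N by rewrite lt0n; apply: contra_neq j_neq0 => j0; exact: val_inj.
  rewrite iter_monomial_map_delta !ffunE eq_sym.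
  by rewrite (negbTE (expg_porbit_neq _)) ?j_gt0 ?ltn_ord // mulr0n !scaler0.
apply: linear_eigen_sum_iter mu_neq0 _.
by rewrite iter_monomial_map_delta prod_r expg_card_porbit.
Qed.

Hypothesis r_neq0 : forall i, r i != 0.

Lemma monomial_map_inj : injective monomial_map.
Proof.
move=> x y /ffunP xy; apply/ffunP=> j.
by have := xy (s j); rewrite !ffunE permK => /mulfI; apply.
Qed.

End MonomialMap.

Section InvariantSubgroup.
Variables (F : finFieldType) (I : finType) (r : I -> F) (s : {perm I}).
Local Notation L := (monomial_map r s).

Definition supported_on (J : {set I}) : {set {ffun I -> F^o}} :=
  [set x : {ffun I -> F^o} | [forall i, (i \notin J) ==> (x i == 0)]].

Lemma supported_on_zmod_closed J : zmod_closed (supported_on J).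
Proof.
split=> [|x y]; first by rewrite inE; apply/forallP=> i; rewrite ffunE eqxx implybT.
rewrite !inE => /forallP xJ /forallP yJ; apply/forallP=> i; apply/implyP=> iJ.
by rewrite !ffunE (eqP (implyP (xJ i) iJ)) (eqP (implyP (yJ i) iJ)) subrr.
Qed.

Lemma monomial_map_supported_on (J : {set I}) :
  {in J, forall i, s i \in J} ->
  {in supported_on J, forall x, L x \in supported_on J}.
Proof.
move=> sJ x; rewrite !inE => /forallP xJ; apply/forallP=> i; apply/implyP=> iJ.
have siJ : (s^-1)%g i \notin J by apply: contra iJ => /sJ; rewrite permKV.
by rewrite ffunE (eqP (implyP (xJ _) siJ)) mulr0.
Qed.

Lemma supported_on_card (J : {set I}) i0 m : i0 \in J -> m \notin J ->
  (1 < #|supported_on J| < #|{ffun I -> F^o}|)%N.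
Proof.
move=> i0J mJ; apply/andP; split.
  apply/card_gt1P; exists 0, (delta_ffun F i0); split.
  - by case: (supported_on_zmod_closed J).
  - rewrite inE; apply/forallP=> i; apply/implyP=> iJ; rewrite ffunE.
    by have [i_i0|] := eqVneq i i0; [rewrite i_i0 i0J in iJ | rewrite mulr0n].
  - apply/eqP=> /ffunP/(_ i0); rewrite !ffunE eqxx => /eqP.
    by rewrite eq_sym oner_eq0.
rewrite -cardsT; apply: proper_card; rewrite properT; apply/negP => /eqP W_full.
have : delta_ffun F m \in supported_on J by rewrite W_full inE.
by rewrite inE => /forallP/(_ m); rewrite mJ ffunE eqxx oner_eq0.
Qed.

Lemma porbit_invariant_subgroup i0 : porbit s i0 != [set: I] ->
  nontrivial_invariant_subgroup L (supported_on (porbit s i0)).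
Proof.
move=> proper; have /subsetPn[m _ mJ] : ~~ ([set: I] \subset porbit s i0).
  by rewrite subTset.
split; [exact: supported_on_zmod_closed | | exact: supported_on_card (porbit_id s i0) mJ].
apply: monomial_map_supported_on => i; rewrite -!eq_porbit_mem => /eqP <-.
by rewrite -{1}[s i]/((s ^+ 1)%g i) porbit_perm.
Qed.

Lemma eigenline_invariant_subgroup (v : {ffun I -> F^o}) mu :
  v != 0 -> L v = mu *: v -> (1 < #|I|)%N ->
  nontrivial_invariant_subgroup L [set c *: v | c : F].
Proof.
move=> v_neq0 Lv I_gt1; split.
- split=> [|_ _ /imsetP[c _ ->] /imsetP[d _ ->]].
    by apply/imsetP; exists 0; rewrite ?scale0r.
  by apply/imsetP; exists (c - d); rewrite ?scalerBl.
- move=> _ /imsetP[c _ ->]; apply/imsetP; exists (c * mu) => //.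
  by rewrite linearZ /= Lv scalerA.
apply/andP; split.
  apply/card_gt1P; exists 0, v; rewrite eq_sym v_neq0.
  by split=> //; apply/imsetP; [exists 0; rewrite ?scale0r | exists 1; rewrite ?scale1r].
have F_gt1 : (1 < #|F|)%N by apply/card_gt1P; exists 0, 1; rewrite eq_sym oner_neq0.
rewrite card_ffun; apply: leq_ltn_trans (leq_imset_card _ _) _.
by rewrite -{1}(expn1 #|F|) ltn_exp2l.
Qed.

Lemma monomial_map_invariant_subgroup : (1 < #|I|)%N ->
  (forall i, exists2 t : F, t != 0 & r i = t ^+ #|I|) ->
  exists W, nontrivial_invariant_subgroup L W.
Proof.
move=> I_gt1 r_pow; have /card_gt0P[i0 _] := ltnW I_gt1.
have [full|proper] := eqVneq (porbit s i0) [set: I]; last first.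
  by exists (supported_on (porbit s i0)); apply: porbit_invariant_subgroup.
have [mu mu_neq0 prod_r] : exists2 mu, mu != 0 &
    \prod_(l < #|porbit s i0|) r ((s ^+ l.+1)%g i0) = mu ^+ #|I|.
  exact: prod_nonzero_expr.
rewrite -cardsT -full in prod_r.
have [v v_i0 Lv] := monomial_map_eigenvector mu_neq0 prod_r.
exists [set c *: v | c : F]; apply: eigenline_invariant_subgroup Lv I_gt1.
by apply: contraTneq isT => v0; move: v_i0; rewrite v0 ffunE => /eqP; rewrite eq_sym oner_eq0.
Qed.

End InvariantSubgroup.

Theorem mainTheorem7 (p k : nat) (p_prime : prime p) (k_ge2 : (2 <= k)%N)
  (r b : 'I_k -> 'F_p) (s : 'S_k) :
  (forall i, kth_powers p k (r i)) ->
  imprimitive (wreath_act r b s).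
Proof.
move=> r_kth.
have r_pow i : exists2 t : 'F_p, t != 0 & r i = t ^+ #|'I_k|.
  by have /existsP[t /andP[t_neq0 /eqP ->]] := r_kth i; exists t; rewrite ?card_ord.
have r_neq0 i : r i != 0 by have [t t_neq0 ->] := r_pow i; rewrite expf_neq0.
have [|W W_inv] := monomial_map_invariant_subgroup s _ r_pow; first by rewrite card_ord.
apply: coset_blocks_imprimitive W_inv; first exact: monomial_map_inj.
by move=> x y; apply/ffunP=> i; rewrite !ffunE; ring.
Qed.
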